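(* Let $\varepsilon>0$, $\alpha_3,\beta_3\in\mathbb R$, and set $\gamma=\frac{1}{\sqrt{1+\varepsilon}}$, $\mu_2=\frac12\sqrt{\frac{\varepsilon}{1+\varepsilon}}$, $\mu_1=\frac{\sqrt\varepsilon}{2}$, so that $W$ has the simple eigenvalues $\pm i$ and $\pm\frac{i}{\sqrt{1+\varepsilon}}$. Let $\delta_{1,2}$ and $\delta_{3,4}$ denote the cubic normal-form coefficients (defined in the context) associated with the eigenvalues $\lambda=i$ and $\lambda=\frac{i}{\sqrt{1+\varepsilon}}$, respectively. Then there exist constants $\kappa_1,\kappa_2>0$ (depending only on $\varepsilon$ and on the normalization of the eigenvectors) such that $$\delta_{1,2}=\kappa_1\Big(-\frac{\varepsilon\sqrt{\varepsilon}}{1+\varepsilon}+\frac{3\sqrt{\varepsilon}}{1+\varepsilon}\alpha_3-\frac{3(1+\varepsilon)}{\sqrt{\varepsilon}}\beta_3\Big),\qquad \delta_{3,4}=\kappa_2\Big(-\sqrt{\varepsilon}\,\alpha_3+\frac{(1+\varepsilon)^2}{\sqrt{\varepsilon}}\beta_3\Big).$$ In particular, in both coefficients the ratio of the coefficient of $\alpha_3$ to that of $\beta_3$ equals $-\frac{\varepsilon}{(1+\varepsilon)^2}$, so that if $\beta_3=\frac{\varepsilon}{(1+\varepsilon)^2}\alpha_3$ then $\delta_{1,2}=-\kappa_1\frac{\varepsilon\sqrt\varepsilon}{1+\varepsilon}<0$ and $\delta_{3,4}=0$, independently of $\alpha_3$.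
   Context: The coupled Van der Pol–Duffing oscillator / nonlinear absorber system, in dimensionless form with state $x=(x_1,x_2,x_3,x_4)=(q_1,\dot q_1,q_1-q_2,\dot q_1-\dot q_2)$, is $\dot x=Wx+b(x)$, where $$W=\begin{pmatrix}0&1&0&0\\ -1&2\mu_1&-\gamma^2\varepsilon&-2\mu_2\gamma\varepsilon\\ 0&0&0&1\\ -1&2\mu_1&-\gamma^2(1+\varepsilon)&-2\mu_2\gamma(1+\varepsilon)\end{pmatrix},\quad b(x)=\begin{pmatrix}0\\ -2\mu_1x_1^2x_2-\alpha_3x_1^3-\beta_3\varepsilon x_3^3\\ 0\\ -2\mu_1x_1^2x_2-\alpha_3x_1^3-\beta_3(1+\varepsilon)x_3^3\end{pmatrix},$$ with $\varepsilon>0$ the mass ratio, $\alpha_3$ the primary cubic stiffness coefficient and $\beta_3$ the absorber cubic stiffness coefficient. For a simple purely imaginary eigenvalue $\lambda$ of $W$ with right eigenvector $v$ ($Wv=\lambda v$) and left eigenvector $w$ ($w^TW=\lambda w^T$, $w^Tv\neq0$), define $c_\lambda$ as the coefficient of $z^2\bar z$ in the polynomial $w^T b(vz+\bar v\bar z)$ in the variables $z,\bar z$, divided by $w^Tv$, and set $\delta=\mathrm{Re}\,c_\lambda$. This is the coefficient in the (single-pair, cubic-order) Hopf normal form $\dot r=(\mathrm{Re}\lambda) r+\delta r^3$; rescaling $v$ by $k\neq0$ multiplies $\delta$ by $|k|^2$, so its sign is normalization independent. $\delta<0$ corresponds to a supercritical and $\delta>0$ to a subcritical Hopf bifurcation.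 *)

(* Complex numbers are modelled by an arbitrary
   numClosedFieldType C (algebraically closed field with conjugation and
   order, e.g. the complex numbers). *)
From HB Require Import structures.
From mathcomp Require Import all_boot all_order all_algebra.
Set Implicit Arguments. Unset Strict Implicit. Unset Printing Implicit Defensive.
Import Order.TTheory GRing.Theory Num.Theory.
Local Open Scope ring_scope.

Definition Wmat (R : pzRingType) (mu1 mu2 gam eps : R) : 'M[R]_4 :=
  \matrix_(i < 4, j < 4)
    nth 0 (nth [::]
      [:: [:: 0; 1; 0; 0];
          [:: -1; 2 * mu1; - (gam ^+ 2 * eps); - (2 * mu2 * gam * eps)];
          [:: 0; 0; 0; 1];
          [:: -1; 2 * mu1; - (gam ^+ 2 * (1 + eps)); - (2 * mu2 * gam * (1 + eps))]]
      i) j.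

Definition bvec (R : comPzRingType) (mu1 a3 b3 eps : R) (x : 'cV[R]_4) : 'cV[R]_4 :=
  let x1 := x (inord 0) ord0 in
  let x2 := x (inord 1) ord0 in
  let x3 := x (inord 2) ord0 in
  \col_(i < 4)
    nth 0 [:: 0;
              - (2 * mu1 * x1 ^+ 2 * x2) - a3 * x1 ^+ 3 - b3 * eps * x3 ^+ 3;
              0;
              - (2 * mu1 * x1 ^+ 2 * x2) - a3 * x1 ^+ 3 - b3 * (1 + eps) * x3 ^+ 3] i.

(* c_lambda: coefficient of z^2 zbar in w^T b(v z + conj(v) zbar), divided by
   w^T v.  The polynomial in the independent variables z, zbar is represented
   in {poly {poly C}}: z is the inner variable ('X)%:P, zbar the outer 'X.
   So the coefficient of z^2 zbar^1 is ((p`_1)`_2). *)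
Definition nf_coeff (C : numClosedFieldType) (mu1 a3 b3 eps : C)
    (v w : 'cV[C]_4) : C :=
  let up := fun c : C => (c%:P)%:P : {poly {poly C}} in
  let z : {poly {poly C}} := ('X : {poly C})%:P in
  let zb : {poly {poly C}} := 'X in
  let x := z *: map_mx up v + zb *: map_mx (fun c => up (c^*)) v in
  let p := ((map_mx up w)^T *m bvec (up mu1) (up a3) (up b3) (up eps) x) ord0 ord0 in
  ((p`_1)`_2) / ((w^T *m v) ord0 ord0).

Definition nf_delta (C : numClosedFieldType) (mu1 a3 b3 eps : C)
    (v w : 'cV[C]_4) : C := 'Re (nf_coeff mu1 a3 b3 eps v w).

Definition gam_of (C : numClosedFieldType) (eps : C) : C := (sqrtC (1 + eps))^-1.
Definition mu2_of (C : numClosedFieldType) (eps : C) : C := sqrtC (eps / (1 + eps)) / 2.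
Definition mu1_of (C : numClosedFieldType) (eps : C) : C := sqrtC eps / 2.
Definition W_of (C : numClosedFieldType) (eps : C) : 'M[C]_4 :=
  Wmat (mu1_of eps) (mu2_of eps) (gam_of eps) eps.

Definition eigpair (C : numClosedFieldType) (M : 'M[C]_4) (lam : C)
    (v w : 'cV[C]_4) : Prop :=
  [/\ M *m v = lam *: v, w^T *m M = lam *: w^T & (w^T *m v) ord0 ord0 != 0].

(* For a simple eigenvalue the right and left eigenvectors are unique up to
   scaling, and rescaling v by k and w by l != 0 multiplies c_lambda by |k|^2:
   its numerator is cubic in v with one conjugated factor and linear in w,
   while w^T v is bilinear.  So delta = |v0|^2 delta(v^, w^) for explicit
   normalized eigenvectors v^, w^, and delta(v^, w^) is computed by writing
   c_lambda(v^, w^) = x + i y with x, y real (alpha_3, beta_3 being real). *)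

From HB Require Import structures.
From mathcomp Require Import all_boot all_order all_algebra ring.
Import Order.TTheory GRing.Theory Num.Theory.
Set Implicit Arguments. Unset Strict Implicit. Unset Printing Implicit Defensive.
Local Open Scope ring_scope.

Lemma inord4E : (inord 0 = ord0 :> 'I_4) * (inord 1 = lift ord0 ord0 :> 'I_4)
  * (inord 2 = lift ord0 (lift ord0 ord0) :> 'I_4)
  * (inord 3 = lift ord0 (lift ord0 (lift ord0 ord0)) :> 'I_4).
Proof. by do ! split; apply: val_inj; rewrite /= inordK. Qed.

Section Col4.
Variable R : comPzRingType.
Implicit Types (a b c d k : R) (v : 'cV[R]_4).

Definition col4 a b c d : 'cV[R]_4 := \col_(i < 4) nth 0 [:: a; b; c; d] i.

Lemma col4_eta v :
  v = col4 (v (inord 0) ord0) (v (inord 1) ord0) (v (inord 2) ord0) (v (inord 3) ord0).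
Proof.
apply/matrixP => i j; rewrite !mxE ord1 !inord4E.
by case: i => -[|[|[|[|]]]] //= ?; congr (v _ _); apply: val_inj.
Qed.

Lemma col4_ind (P : 'cV[R]_4 -> Prop) :
  (forall a b c d, P (col4 a b c d)) -> forall v, P v.
Proof. by move=> Pcol v; rewrite (col4_eta v). Qed.

Lemma col4_inj a b c d a' b' c' d' :
  col4 a b c d = col4 a' b' c' d' -> [/\ a = a', b = b', c = c' & d = d'].
Proof.
move/matrixP => e.
by split; [move: (e ord0 ord0) | move: (e (inord 1) ord0)
  | move: (e (inord 2) ord0) | move: (e (inord 3) ord0)]; rewrite !mxE ?inord4E.
Qed.

Lemma scale_col4 k a b c d : k *: col4 a b c d = col4 (k * a) (k * b) (k * c) (k * d).
Proof. by apply/matrixP => i j; rewrite !mxE; case: i => -[|[|[|[|]]]]. Qed.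

Lemma col4_dot a b c d a' b' c' d' :
  ((col4 a b c d)^T *m col4 a' b' c' d') ord0 ord0 = a * a' + b * b' + c * c' + d * d'.
Proof. by rewrite !mxE !big_ord_recl big_ord0 /= !mxE /= addr0 !addrA. Qed.

Lemma Wmat_mul_col4 mu1 mu2 gam eps a b c d :
  Wmat mu1 mu2 gam eps *m col4 a b c d =
  col4 b (- a + 2 * mu1 * b - gam ^+ 2 * eps * c - 2 * mu2 * gam * eps * d)
       d (- a + 2 * mu1 * b - gam ^+ 2 * (1 + eps) * c - 2 * mu2 * gam * (1 + eps) * d).
Proof.
apply/matrixP => i j; rewrite !mxE !big_ord_recl big_ord0 /= !mxE /=.
by case: i => -[|[|[|[|]]]] //= _; ring.
Qed.

Lemma col4_mul_Wmat mu1 mu2 gam eps a b c d :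
  (col4 a b c d)^T *m Wmat mu1 mu2 gam eps =
  (col4 (- b - d) (a + 2 * mu1 * (b + d))
        (- (gam ^+ 2 * eps) * b - gam ^+ 2 * (1 + eps) * d)
        (c - 2 * mu2 * gam * eps * b - 2 * mu2 * gam * (1 + eps) * d))^T.
Proof.
apply/matrixP => i j; rewrite !mxE !big_ord_recl big_ord0 /= !mxE /=.
by case: j => -[|[|[|[|]]]] //= _; ring.
Qed.

End Col4.

Lemma eq_lincomb (R : comPzRingType) (x y l r c : R) :
  l = r -> x - y = c * (l - r) -> x = y.
Proof. by move=> -> /eqP; rewrite subrr mulr0 subr_eq0 => /eqP. Qed.

Lemma eq_lincomb2 (R : comPzRingType) (x y l1 r1 l2 r2 c1 c2 : R) :
  l1 = r1 -> l2 = r2 -> x - y = c1 * (l1 - r1) + c2 * (l2 - r2) -> x = y.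
Proof. by move=> -> -> /eqP; rewrite !subrr !mulr0 addr0 subr_eq0 => /eqP. Qed.

Section Eigen.
Variables (R : comPzRingType) (mu1 mu2 gam eps lam : R).

Lemma Wmat_right_eigen a b c d :
  Wmat mu1 mu2 gam eps *m col4 a b c d = lam *: col4 a b c d ->
  [/\ b = lam * a, d = lam * c &
      - a + 2 * mu1 * b - gam ^+ 2 * (1 + eps) * c - 2 * mu2 * gam * (1 + eps) * d = lam * d].
Proof. by rewrite Wmat_mul_col4 scale_col4 => /col4_inj[]. Qed.

Lemma Wmat_left_eigen a b c d :
  (col4 a b c d)^T *m Wmat mu1 mu2 gam eps = lam *: (col4 a b c d)^T ->
  [/\ - b - d = lam * a, a + 2 * mu1 * (b + d) = lam * b &
      - (gam ^+ 2 * eps) * b - gam ^+ 2 * (1 + eps) * d = lam * c].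
Proof. by rewrite col4_mul_Wmat -linearZ /= scale_col4 => /trmx_inj/col4_inj[]. Qed.

End Eigen.

Section NormalForm.
Variable C : numClosedFieldType.
Implicit Types (a b c k : C).

Definition mixed_cubic a b c : C := a * b * c^* + a * b^* * c + a^* * b * c.

(* a z + a^* zbar, with z = 'Y and zbar = 'X as in nf_coeff *)
Definition zlin a : {poly {poly C}} := 'Y * (a%:P)%:P + 'X * ((a^*)%:P)%:P.

Lemma coef_mixed_cubic k a b c :
  (((k%:P)%:P * (zlin a * zlin b * zlin c))`_1)`_2 = k * mixed_cubic a b c.
Proof.
have -> : (k%:P)%:P * (zlin a * zlin b * zlin c) =
   ((k * a * b * c)%:P * 'X^3)%:P + 'X * ((k * mixed_cubic a b c)%:P * 'X^2)%:P
   + 'X^2 * ((k * mixed_cubic a^* b^* c^*)%:P * 'X)%:P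
   + 'X^3 * ((k * a^* * b^* * c^*)%:P)%:P.
  by rewrite /zlin /mixed_cubic !conjCK; ring.
rewrite !coefD coefC /= coefXM /= coefXnM /= coefXnM /= coefC /=.
by rewrite coefC /= coefCM coefXn /= mulr1 add0r !addr0.
Qed.

Lemma nf_coeff_col4 mu1 a3 b3 eps v0 v1 v2 v3 w0 w1 w2 w3 :
  nf_coeff mu1 a3 b3 eps (col4 v0 v1 v2 v3) (col4 w0 w1 w2 w3) =
  (- (w1 + w3) * (2 * mu1 * mixed_cubic v0 v0 v1 + a3 * mixed_cubic v0 v0 v0)
   - (w1 * eps + w3 * (1 + eps)) * b3 * mixed_cubic v2 v2 v2)
  / (w0 * v0 + w1 * v1 + w2 * v2 + w3 * v3).
Proof.
rewrite /nf_coeff col4_dot; congr (_ / _).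
rewrite !mxE !big_ord_recl big_ord0 /= !mxE /= !inord4E /= -!/(zlin _).
pose up (c : C) : {poly {poly C}} := (c%:P)%:P.
transitivity (((up (- (w1 + w3) * (2 * mu1)) * (zlin v0 * zlin v0 * zlin v1)
  + up (- (w1 + w3) * a3) * (zlin v0 * zlin v0 * zlin v0)
  + up (- (w1 * eps + w3 * (1 + eps)) * b3) * (zlin v2 * zlin v2 * zlin v2))`_1)`_2).
  congr (fun p : {poly {poly C}} => (p`_1)`_2); rewrite /up.
  move: (zlin v0) (zlin v1) (zlin v2) => p0 p1 p2.
  by rewrite !(rmorphM, rmorphD, rmorphN) /=; ring.
by rewrite !coefD !coef_mixed_cubic; ring.
Qed.

Lemma mixed_cubic_scale k a b c :
  mixed_cubic (k * a) (k * b) (k * c) = `|k| ^+ 2 * k * mixed_cubic a b c.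
Proof. by rewrite /mixed_cubic normCK !rmorphM /=; ring. Qed.

Lemma nf_coeff_scale mu1 a3 b3 eps k l (v w : 'cV[C]_4) : l != 0 ->
  nf_coeff mu1 a3 b3 eps (k *: v) (l *: w) = `|k| ^+ 2 * nf_coeff mu1 a3 b3 eps v w.
Proof.
move=> l0; rewrite (col4_eta v) (col4_eta w) !scale_col4 !nf_coeff_col4.
rewrite !mixed_cubic_scale.
set N := (X in _ = _ * (X / _)); set D := (X in _ = _ * (_ / X)).
have [->|k0] := eqVneq k 0; first by rewrite normr0 expr0n /= !(mul0r, mulr0, addr0, subr0).
rewrite [X in X / _ = _](_ : _ = `|k| ^+ 2 * N * (k * l)); last by rewrite /N; ring.
rewrite [X in _ / X = _](_ : _ = D * (k * l)); last by rewrite /D; ring.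
by rewrite invfM mulrACA divff ?mulf_neq0 // mulr1 mulrA.
Qed.

Lemma Re_realMl (x z : C) : x \is Num.real -> 'Re (x * z) = x * 'Re z.
Proof. by move=> xr; rewrite ReM (Creal_ReP _ xr) (Creal_ImP _ xr) mul0r subr0. Qed.

Lemma nf_delta_scale mu1 a3 b3 eps k l (v w : 'cV[C]_4) : l != 0 ->
  nf_delta mu1 a3 b3 eps (k *: v) (l *: w) = `|k| ^+ 2 * nf_delta mu1 a3 b3 eps v w.
Proof.
by move=> l0; rewrite /nf_delta nf_coeff_scale // Re_realMl // rpredX // normr_real.
Qed.

End NormalForm.

Lemma sqrtC_div (C : numClosedFieldType) (x y : C) : 0 <= x -> 0 < y ->
  sqrtC (x / y) = sqrtC x / sqrtC y.
Proof.
move=> x_ge0 y_gt0.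
have -> : x / y = (sqrtC x / sqrtC y) ^+ 2 by rewrite expr_div_n !sqrtCK.
by rewrite sqrCK // divr_ge0 // sqrtC_ge0 // (ltW y_gt0).
Qed.

(* s and r stand for sqrtC eps and sqrtC (1 + eps), so that W = W_of (s ^+ 2). *)
Section TunedSystem.
Variables (C : numClosedFieldType) (s r : C).
Hypotheses (s_gt0 : 0 < s) (r_gt0 : 0 < r) (rE : r ^+ 2 = 1 + s ^+ 2).

Let W := Wmat (s / 2) (s / r / 2) r^-1 (s ^+ 2).
Let ii : 'i * 'i = -1 :> C := mulCii C.
Let s_neq0 : s != 0. Proof. by rewrite gt_eqF. Qed.
Let r_neq0 : r != 0. Proof. by rewrite gt_eqF. Qed.
Let s_real : s \is Num.real. Proof. by rewrite gtr0_real. Qed.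
Let r_real : r \is Num.real. Proof. by rewrite gtr0_real. Qed.
Let s2D1_gt0 : 0 < 1 + s ^+ 2. Proof. by rewrite addr_gt0 // exprn_gt0. Qed.
Let s2D1_neq0 : 1 + s ^+ 2 != 0. Proof. by rewrite gt_eqF. Qed.

Lemma W_right_eigen lam a b c d : W *m col4 a b c d = lam *: col4 a b c d ->
  [/\ b = lam * a, d = lam * c & - a + s * b - c - s * d = lam * d].
Proof.
case/Wmat_right_eigen => -> -> E4; split=> //.
by rewrite -E4; field: rE; rewrite r_neq0.
Qed.

Lemma W_left_eigen lam a b c d : (col4 a b c d)^T *m W = lam *: (col4 a b c d)^T ->
  [/\ - b - d = lam * a, a + s * (b + d) = lam * b &
      - (s ^+ 2 / (1 + s ^+ 2)) * b - d = lam * c].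
Proof.
case/Wmat_left_eigen => -> E2 E3; split=> //; first by rewrite -E2; field.
by rewrite -E3; field: rE; rewrite r_neq0.
Qed.

Let sDi_neq0 : s + 'i != 0.
Proof.
apply: contra_neq s2D1_neq0 => sDi0.
have -> : 1 + s ^+ 2 = (s + 'i) * (s - 'i) by ring: ii.
by rewrite sDi0 mul0r.
Qed.

Lemma eigvecs_i (v w : 'cV[C]_4) : eigpair W 'i v w ->
  exists v0 w0 : C, [/\ v0 != 0, w0 != 0,
    v = v0 *: col4 1 'i ((s + 'i) / s) ('i * (s + 'i) / s) &
    w = w0 *: col4 1 (- ('i + s)) ((s ^+ 2 + 'i * s) / (1 + s ^+ 2)) s].
Proof.
elim/col4_ind: v => v0 v1 v2 v3; elim/col4_ind: w => w0 w1 w2 w3.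
case=> /W_right_eigen[V1 V3 V4] /W_left_eigen[W1 W2 W3]; subst v1 v3.
have -> : v2 = v0 * (s + 'i) / s.
  by apply: (eq_lincomb V4 (c := 'i / s)); field: ii.
have Ew1 : w1 = - w0 * ('i + s).
  by apply: (eq_lincomb2 W1 W2 (c1 := 'i * s) (c2 := 'i)); ring: ii.
subst w1.
have Ew3 : w3 = s * w0 by apply: (eq_lincomb W1 (c := -1)); ring: ii.
subst w3.
have -> : w2 = w0 * (s ^+ 2 + 'i * s) / (1 + s ^+ 2).
  by apply: (eq_lincomb W3 (c := 'i)); field: ii.
rewrite col4_dot => dot_neq0.
exists v0, w0; split; rewrite ?scale_col4.
- by apply: contra_neq dot_neq0 => ->; ring.
- by apply: contra_neq dot_neq0 => ->; ring.
- by congr col4; field.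
- by congr col4; field.
Qed.

Lemma nf_delta_eigvecs_i a3 b3 : a3 \is Num.real -> b3 \is Num.real ->
  nf_delta (s / 2) a3 b3 (s ^+ 2) (col4 1 'i ((s + 'i) / s) ('i * (s + 'i) / s))
    (col4 1 (- ('i + s)) ((s ^+ 2 + 'i * s) / (1 + s ^+ 2)) s) =
  (1 + s ^+ 2) / (2 * s ^+ 2) *
    (- (s ^+ 2 * s / (1 + s ^+ 2)) + 3 * s / (1 + s ^+ 2) * a3 - 3 * (1 + s ^+ 2) / s * b3).
Proof.
move=> a3_real b3_real.
rewrite /nf_delta nf_coeff_col4 /mixed_cubic.
rewrite !(rmorphM, rmorphD, rmorphN, fmorphV, rmorph1) /= conjCi (conj_Creal s_real).
rewrite [X in 'Re X](_ : _ = (- s ^+ 2 + 3 * a3 - 3 * b3 * (1 + s ^+ 2) ^+ 2 / s ^+ 2) / (2 * s)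
   + 'i * ((1 + 3 * a3 + 3 * b3 * (1 + s ^+ 2) ^+ 2 / s ^+ 2) / 2)).
  rewrite Re_rect ?(rpredD, rpredB, rpredM, rpredN, rpredX, rpredV, rpred1, rpred_nat) //.
  by field; rewrite s_neq0 s2D1_neq0.
field: ii; rewrite s_neq0 s2D1_neq0 /=.
rewrite [X in X != 0](_ : _ = 2 * s ^+ 2 * (s + 'i)); last by ring: ii.
by rewrite !mulf_neq0 ?pnatr_eq0 ?expf_neq0.
Qed.

Lemma eigvecs_i_over_r (v w : 'cV[C]_4) : eigpair W ('i / r) v w ->
  exists v0 w0 : C, [/\ v0 != 0, w0 != 0,
    v = v0 *: col4 1 ('i / r) ('i * r / s) (- s^-1) &
    w = w0 *: col4 1 (- ('i * r + s)) ('i * s / r) (s + 'i * s ^+ 2 / r)].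
Proof.
elim/col4_ind: v => v0 v1 v2 v3; elim/col4_ind: w => w0 w1 w2 w3.
case=> /W_right_eigen[V1 V3 V4] /W_left_eigen[W1 W2 W3]; subst v1 v3.
have s2Dr2_neq0 : s ^+ 2 + r ^+ 2 != 0.
  by rewrite gt_eqF // addr_gt0 // exprn_gt0.
have -> : v2 = v0 * ('i * r / s).
  apply: (eq_lincomb V4 (c := - r ^+ 2 * (s - 'i * r) / (s * (s ^+ 2 + r ^+ 2)))).
  by field: ii rE; rewrite r_neq0 s2Dr2_neq0 s_neq0.
have Ew1 : w1 = - w0 * ('i * r + s).
  apply: (eq_lincomb2 W1 W2 (c1 := 'i * r * s) (c2 := 'i * r)).
  by field: ii; rewrite r_neq0.
subst w1.
have Ew3 : w3 = w0 * (s + 'i * s ^+ 2 / r).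
  by apply: (eq_lincomb W1 (c := -1)); field: ii rE.
subst w3.
have -> : w2 = w0 * ('i * s / r).
  apply: (eq_lincomb W3 (c := 'i * r)).
  by field: ii rE; rewrite r_neq0 s2D1_neq0.
rewrite col4_dot => dot_neq0.
exists v0, w0; split; rewrite ?scale_col4.
- by apply: contra_neq dot_neq0 => ->; ring.
- by apply: contra_neq dot_neq0 => ->; ring.
- by congr col4; field: ii; rewrite ?r_neq0 ?s_neq0.
- by congr col4; field.
Qed.

Lemma nf_delta_eigvecs_i_over_r a3 b3 : a3 \is Num.real -> b3 \is Num.real ->
  nf_delta (s / 2) a3 b3 (s ^+ 2) (col4 1 ('i / r) ('i * r / s) (- s^-1))
    (col4 1 (- ('i * r + s)) ('i * s / r) (s + 'i * s ^+ 2 / r)) =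
  3 / (2 * s ^+ 2) * (- (s * a3) + (1 + s ^+ 2) ^+ 2 / s * b3).
Proof.
move=> a3_real b3_real.
rewrite /nf_delta nf_coeff_col4 /mixed_cubic.
rewrite !(rmorphM, rmorphD, rmorphN, fmorphV, rmorph1) /= conjCi.
rewrite (conj_Creal s_real) (conj_Creal r_real).
rewrite [X in 'Re X](_ : _ = (- 3 * a3 + 3 * b3 * (1 + s ^+ 2) ^+ 2 / s ^+ 2) / (2 * s)
   + 'i * (- 1 / (2 * r))).
  rewrite Re_rect ?(rpredD, rpredB, rpredM, rpredN, rpredX, rpredV, rpred1, rpred_nat) //.
  by field; rewrite s_neq0.
field: ii rE; rewrite r_neq0 s_neq0 /=.
rewrite [X in X != 0](_ : _ = - (2 * 'i * s ^+ 2)); last by ring: ii.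
by rewrite oppr_eq0 !mulf_neq0 ?pnatr_eq0 ?neq0Ci ?expf_neq0.
Qed.

Lemma nf_delta_at_i (v w : 'cV[C]_4) : eigpair W 'i v w ->
  exists2 k : C, 0 < k & forall a3 b3, a3 \is Num.real -> b3 \is Num.real ->
    nf_delta (s / 2) a3 b3 (s ^+ 2) v w =
    k * (- (s ^+ 2 * s / (1 + s ^+ 2)) + 3 * s / (1 + s ^+ 2) * a3
         - 3 * (1 + s ^+ 2) / s * b3).
Proof.
case/eigvecs_i => v0 [w0 [v0_neq0 w0_neq0 -> ->]].
exists (`|v0| ^+ 2 * ((1 + s ^+ 2) / (2 * s ^+ 2))) => [|a3 b3 a3_real b3_real].
  by rewrite mulr_gt0 ?exprn_gt0 ?normr_gt0 // divr_gt0 // mulr_gt0 ?exprn_gt0.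
by rewrite nf_delta_scale // nf_delta_eigvecs_i // mulrA.
Qed.

Lemma nf_delta_at_i_over_r (v w : 'cV[C]_4) : eigpair W ('i / r) v w ->
  exists2 k : C, 0 < k & forall a3 b3, a3 \is Num.real -> b3 \is Num.real ->
    nf_delta (s / 2) a3 b3 (s ^+ 2) v w =
    k * (- (s * a3) + (1 + s ^+ 2) ^+ 2 / s * b3).
Proof.
case/eigvecs_i_over_r => v0 [w0 [v0_neq0 w0_neq0 -> ->]].
exists (`|v0| ^+ 2 * (3 / (2 * s ^+ 2))) => [|a3 b3 a3_real b3_real].
  by rewrite mulr_gt0 ?exprn_gt0 ?normr_gt0 // divr_gt0 // mulr_gt0 ?exprn_gt0.
by rewrite nf_delta_scale // nf_delta_eigvecs_i_over_r // mulrA.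
Qed.

End TunedSystem.

Theorem mainTheorem2 (C : numClosedFieldType) (eps : C) (heps : 0 < eps) :
  (* delta_{1,2}, eigenvalue i *)
  (forall v w : 'cV[C]_4, eigpair (W_of eps) 'i v w ->
   exists k1 : C, 0 < k1 /\
     (forall a3 b3 : C, a3 \is Num.real -> b3 \is Num.real ->
        nf_delta (mu1_of eps) a3 b3 eps v w =
        k1 * (- (eps * sqrtC eps / (1 + eps))
              + 3 * sqrtC eps / (1 + eps) * a3
              - 3 * (1 + eps) / sqrtC eps * b3)) /\
     (forall a3 : C, a3 \is Num.real ->
        nf_delta (mu1_of eps) a3 (eps / (1 + eps) ^+ 2 * a3) eps v w =
          - (k1 * (eps * sqrtC eps / (1 + eps))) /\
        nf_delta (mu1_of eps) a3 (eps / (1 + eps) ^+ 2 * a3) eps v w < 0)) /\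
  (* delta_{3,4}, eigenvalue i / sqrt(1 + eps) *)
  (forall v w : 'cV[C]_4, eigpair (W_of eps) ('i / sqrtC (1 + eps)) v w ->
   exists k2 : C, 0 < k2 /\
     (forall a3 b3 : C, a3 \is Num.real -> b3 \is Num.real ->
        nf_delta (mu1_of eps) a3 b3 eps v w =
        k2 * (- (sqrtC eps * a3) + (1 + eps) ^+ 2 / sqrtC eps * b3)) /\
     (forall a3 : C, a3 \is Num.real ->
        nf_delta (mu1_of eps) a3 (eps / (1 + eps) ^+ 2 * a3) eps v w = 0)) /\
  (* ratio of the alpha_3- to the beta_3-coefficient *)
  (3 * sqrtC eps / (1 + eps)) / (- (3 * (1 + eps) / sqrtC eps)) = - (eps / (1 + eps) ^+ 2) /\
  (- sqrtC eps) / ((1 + eps) ^+ 2 / sqrtC eps) = - (eps / (1 + eps) ^+ 2).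
Proof.
have r_gt0 : 0 < sqrtC (1 + eps) by rewrite sqrtC_gt0 addr_gt0.
rewrite /W_of /mu1_of /mu2_of /gam_of sqrtC_div ?ltW ?addr_gt0 //.
have s_gt0 : 0 < sqrtC eps by rewrite sqrtC_gt0.
have rE : sqrtC (1 + eps) ^+ 2 = 1 + eps by rewrite sqrtCK.
have epsE : eps = sqrtC eps ^+ 2 by rewrite sqrtCK.
move: (sqrtC eps) (sqrtC (1 + eps)) s_gt0 r_gt0 rE epsE => s r s_gt0 r_gt0 + epsE.
subst eps => rE.
have s_neq0 : s != 0 by rewrite gt_eqF.
have s2D1_gt0 : 0 < 1 + s ^+ 2 by rewrite addr_gt0 // exprn_gt0.
have s2D1_neq0 : 1 + s ^+ 2 != 0 by rewrite gt_eqF.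
have beta_real a3 : a3 \is Num.real -> s ^+ 2 / (1 + s ^+ 2) ^+ 2 * a3 \is Num.real.
  by move=> a3_real; rewrite !(rpredM, rpredX, rpredV, rpredD, rpred1) // ?gtr0_real.
split; [|split; [|split]].
- move=> v w /(nf_delta_at_i s_gt0 r_gt0 rE)[k k_gt0 deltaE].
  exists k; split=> //; split=> [|a3 a3_real]; first exact: deltaE.
  rewrite deltaE ?beta_real // [_ * _](_ : _ = - (k * (s ^+ 2 * s / (1 + s ^+ 2)))).
    by split=> //; rewrite oppr_lt0 !mulr_gt0 ?exprn_gt0 ?invr_gt0.
  by field; rewrite s_neq0 s2D1_neq0.
- move=> v w /(nf_delta_at_i_over_r s_gt0 r_gt0 rE)[k k_gt0 deltaE].
  exists k; split=> //; split=> [|a3 a3_real]; first exact: deltaE.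
  by rewrite deltaE ?beta_real //; field; rewrite s_neq0 s2D1_neq0.
- by field; rewrite s_neq0 s2D1_neq0.
- by field; rewrite s_neq0 s2D1_neq0.
Qed.
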